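(* Let $(\mathcal{B}_n)_{n\in\mathbb{N}}$ be a countable inverse system of complete topological rings with continuous surjective transition homomorphisms $p_{m,n}\colon\mathcal{B}_m\to\mathcal{B}_n$ for $m\ge n\ge0$, let $\mathcal{B}=\varprojlim_n\mathcal{B}_n$ with the inverse limit topology and let $p_n\colon\mathcal{B}\to\mathcal{B}_n$ be the canonical projections. Let $\mathrm{e}_n\colon\mathcal{B}_n\to\mathcal{B}_n\{T\}$, $n\in\mathbb{N}$, be restricted exponential homomorphisms such that $\mathrm{e}_n\circ p_{m,n}=(p_{m,n}\widehat{\otimes}\mathrm{id}_{\mathbb{Z}[T]})\circ\mathrm{e}_m$ for all $m\ge n\ge0$. Then there exists a unique restricted exponential homomorphism $\underline{\mathrm{e}}=\varprojlim_n\mathrm{e}_n\colon\mathcal{B}\to\mathcal{B}\{T\}$ such that $\mathrm{e}_n\circ p_n=(p_n\widehat{\otimes}\mathrm{id}_{\mathbb{Z}[T]})\circ\underline{\mathrm{e}}$ for every $n\in\mathbb{N}$.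
   Context: Conventions: topological rings are linearly topologized with a countable fundamental system of open ideals; homomorphisms are continuous; complete means the canonical map to $\varprojlim_{\mathfrak{a}}\mathcal{B}/\mathfrak{a}$ (open ideals, discrete quotients) is a topological isomorphism. For complete $\mathcal{C}$, $\mathcal{C}\{T\}$, $\mathcal{C}\{T,T'\}$ denote restricted power series (coefficients converging to $0$), topologized by the ideals of series with all coefficients in a given open ideal. For a continuous ring homomorphism $p\colon\mathcal{C}\to\mathcal{C}'$, $p\widehat{\otimes}\mathrm{id}_{\mathbb{Z}[T]}\colon\mathcal{C}\{T\}\to\mathcal{C}'\{T\}$ is $\sum c_iT^i\mapsto\sum p(c_i)T^i$. A restricted exponential homomorphism of a complete ring $\mathcal{C}$ is a continuous ring homomorphism $\mathrm{e}\colon\mathcal{C}\to\mathcal{C}\{T\}$, $\mathrm{e}(c)=\sum_i\mathrm{e}_i(c)T^i$, with $\mathrm{e}_0=\mathrm{id}$ and $\sum_{i,j}\mathrm{e}_j(\mathrm{e}_i(c))T'^jT^i=\sum_\ell\mathrm{e}_\ell(c)(T+T')^\ell$ for all $c$. *)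

From mathcomp Require Import all_boot all_order all_algebra.
Set Implicit Arguments. Unset Strict Implicit. Unset Printing Implicit Defensive.
Import GRing.Theory.
Local Open Scope ring_scope.

Definition is_ideal (R : comPzRingType) (I : R -> Prop) : Prop :=
  I 0 /\ (forall x y, I x -> I y -> I (x - y)) /\ (forall r x, I x -> I (r * x)).

(* A linear topology with a countable fundamental system of open ideals,
   presented by a decreasing sequence of ideals (lt_basis k)_k forming a
   fundamental system of neighbourhoods of 0. *)
Record lintop (R : comPzRingType) := LinTop {
  lt_basis : nat -> R -> Prop;
  lt_ideal : forall k, is_ideal (lt_basis k);
  lt_decr  : forall k x, lt_basis k.+1 x -> lt_basis k x }.

Definition open_ideal (R : comPzRingType) (t : lintop R) (a : R -> Prop) : Prop :=
  is_ideal a /\ exists k, forall x, lt_basis t k x -> a x.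

Definition is_rhom (R S : comPzRingType) (f : R -> S) : Prop :=
  (forall x y, f (x - y) = f x - f y) /\ (forall x y, f (x * y) = f x * f y)
  /\ f 1 = 1.

Definition lt_continuous (R S : comPzRingType) (tR : lintop R) (tS : lintop S)
  (f : R -> S) : Prop :=
  forall k, exists l, forall x, lt_basis tR l x -> lt_basis tS k (f x).

(* Completeness: the canonical map R -> lim_{a open} R/a is bijective
   (it is then automatically a topological isomorphism).  An element of
   lim_a R/a is represented by a family of representatives c a (for a open)
   with c a = c b mod b whenever a is contained in b. *)
Definition compatible_family (R : comPzRingType) (t : lintop R)
  (c : (R -> Prop) -> R) : Prop :=
  forall a b, open_ideal t a -> open_ideal t b -> (forall x, a x -> b x) ->
    b (c a - c b).

Definition lt_complete (R : comPzRingType) (t : lintop R) : Prop :=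
  (forall x y, (forall a, open_ideal t a -> a (x - y)) -> x = y) /\
  (forall c, compatible_family t c ->
     exists x, forall a, open_ideal t a -> a (x - c a)).

(* A map e : C -> C{T} is given by its coefficient functions:
   e c = \sum_i (e c i) T^i.  The restricted power series ring C{T} consists
   of coefficient sequences tending to 0; it is topologized by the ideals of
   series with all coefficients in a given open ideal. *)
Definition ps_mul (C : comPzRingType) (f g : nat -> C) : nat -> C :=
  fun i => \sum_(j < i.+1) f j * g (i - j)%N.

(* Coefficient of T^i T'^j in (T + T')^l. *)
Definition binom2_coeff (C : comPzRingType) (l i j : nat) : C :=
  if l == (i + j)%N then ('C(l, i))%:R else 0.

Definition restricted_exp (C : comPzRingType) (t : lintop C)
  (e : C -> nat -> C) : Prop :=
  (* e c lies in C{T}: coefficients tend to 0 *)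
  (forall c k, exists N, forall i, (N <= i)%N -> lt_basis t k (e c i)) /\
  (* e is a ring homomorphism C -> C{T} *)
  (forall c d i, e (c - d) i = e c i - e d i) /\
  (forall c d i, e (c * d) i = ps_mul (e c) (e d) i) /\
  (forall i, e 1 i = (i == 0%N)%:R) /\
  (* e is continuous for the topology of C{T} *)
  (forall k, exists l, forall c, lt_basis t l c -> forall i, lt_basis t k (e c i)) /\
  (forall c, e c 0%N = c) /\
  (* \sum_{i,j} e_j(e_i(c)) T'^j T^i = \sum_l e_l(c) (T + T')^l,
     compared coefficientwise (only l <= i + j contribute to T^i T'^j). *)
  (forall c i j, e (e c i) j = \sum_(l < (i + j).+1) e c l * binom2_coeff C l i j).

(* Everything is determined coordinatewise: the projections of E x are forced
   to be the e_n (pr_n x), which form a compatible family, so E exists and is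
   unique.  The ring-homomorphism and exponential identities hold in B because
   they hold after every projection and the projections are jointly injective.
   The two topological conditions (coefficients tending to 0, continuity) hold
   because a basic open ideal of B contains a finite intersection of preimages
   of open ideals of the B_n, and finitely many "eventually" conditions hold
   simultaneously. *)
From mathcomp Require Import all_boot all_order all_algebra.
From Stdlib Require Import IndefiniteDescription FunctionalExtensionality.
Import GRing.Theory.
Local Open Scope ring_scope.

Section RingHom.
Context {R S : comPzRingType} {f : R -> S} (f_rhom : is_rhom f).

Lemma rhomB x y : f (x - y) = f x - f y.
Proof. by case: f_rhom. Qed.

Lemma rhomM x y : f (x * y) = f x * f y.
Proof. by case: f_rhom => _ []. Qed.

Lemma rhom1 : f 1 = 1.
Proof. by case: f_rhom => _ []. Qed.

Lemma rhom0 : f 0 = 0.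
Proof. by have := rhomB 0 0; rewrite !subrr. Qed.

Lemma rhomN x : f (- x) = - f x.
Proof. by have := rhomB 0 x; rewrite !sub0r rhom0 sub0r. Qed.

Lemma rhomD x y : f (x + y) = f x + f y.
Proof. by have := rhomB x (- y); rewrite opprK rhomN opprK. Qed.

Lemma rhom_nat k : f k%:R = k%:R.
Proof. by elim: k => [|k IHk]; [apply: rhom0 | rewrite !mulrS rhomD rhom1 IHk]. Qed.

Lemma rhom_sum n (F : 'I_n -> R) : f (\sum_(j < n) F j) = \sum_(j < n) f (F j).
Proof. exact: (big_morph f rhomD rhom0). Qed.

End RingHom.

Section LimitTopology.
Variables (Bn : nat -> comPzRingType) (tn : forall n, lintop (Bn n)).
Variables (B : comPzRingType) (tB : lintop B) (pr : forall n, B -> Bn n).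
Hypothesis tB_coarse : forall l, exists s : seq (nat * nat),
  forall x, (forall nk, nk \in s -> lt_basis (tn nk.1) nk.2 (pr nk.1 x)) ->
    lt_basis tB l x.

(* [S m] is a decreasing family of index sets, e.g. the tails [m <= i] of a
   sequence or the basic neighbourhoods of 0 in a source ring. *)
Lemma small_of_proj_small {I : Type} {S : nat -> I -> Prop} {x : I -> B} :
  (forall m j, S m.+1 j -> S m j) ->
  (forall n k, exists m, forall j, S m j -> lt_basis (tn n) k (pr n (x j))) ->
  forall l, exists m, forall j, S m j -> lt_basis tB l (x j).
Proof.
move=> S_decr small_pr l; have [s s_basis] := tB_coarse l.
have S_le m m' j : (m <= m')%N -> S m' j -> S m j.
  by move=> /subnK <-; elim: (m' - m)%N => //= d IHd /S_decr.
suff [m Hm] : exists m, forall nk, nk \in s -> forall j, S m j ->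
    lt_basis (tn nk.1) nk.2 (pr nk.1 (x j)).
  by exists m => j Sj; apply: s_basis => nk /Hm; apply.
elim: s {s_basis} => [|[n k] s [m Hm]]; first by exists 0%N.
have [m0 Hm0] := small_pr n k.
exists (maxn m0 m) => nk; rewrite inE => /predU1P [-> | nk_s] j Sj.
  exact/Hm0/(S_le _ _ _ (leq_maxl _ _) Sj).
exact/(Hm _ nk_s)/(S_le _ _ _ (leq_maxr _ _) Sj).
Qed.

Lemma null_seq_of_proj (u : nat -> B) :
  (forall n k, exists N, forall i, (N <= i)%N -> lt_basis (tn n) k (pr n (u i))) ->
  forall k, exists N, forall i, (N <= i)%N -> lt_basis tB k (u i).
Proof. by apply: (small_of_proj_small (S := fun N i => (N <= i)%N)) => N i /ltnW. Qed.

Lemma continuous_of_proj (A : comPzRingType) (tA : lintop A) (F : A -> nat -> B) :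
  (forall n k, exists l, forall c, lt_basis tA l c -> forall i, lt_basis (tn n) k (pr n (F c i))) ->
  forall k, exists l, forall c, lt_basis tA l c -> forall i, lt_basis tB k (F c i).
Proof.
move=> cont_pr k.
have [l Hl] : exists l, forall ci : A * nat,
    lt_basis tA l ci.1 -> lt_basis tB k (F ci.1 ci.2).
  apply: (small_of_proj_small (S := fun l ci => lt_basis tA l ci.1)) => [l ci|n k'].
    exact: lt_decr.
  by have [l Hl] := cont_pr n k'; exists l => -[c i] /Hl.
by exists l => c c_l i; apply: (Hl (c, i)).
Qed.

End LimitTopology.

Section ExponentialLimit.
Variables (Bn : nat -> comPzRingType) (tn : forall n, lintop (Bn n)).
Variables (B : comPzRingType) (tB : lintop B) (pr : forall n, B -> Bn n).
Hypothesis pr_rhom : forall n, is_rhom (pr n).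
Hypothesis pr_inj : forall x y, (forall n, pr n x = pr n y) -> x = y.
Hypothesis pr_cont : forall n, lt_continuous tB (tn n) (pr n).
Hypothesis tB_coarse : forall l, exists s : seq (nat * nat),
  forall x, (forall nk, nk \in s -> lt_basis (tn nk.1) nk.2 (pr nk.1 x)) ->
    lt_basis tB l x.
Variables (e : forall n, Bn n -> nat -> Bn n) (E : B -> nat -> B).
Hypothesis e_exp : forall n, restricted_exp (tn n) (e n).
Hypothesis pr_E : forall n x i, e n (pr n x) i = pr n (E x i).

Lemma restricted_exp_of_proj : restricted_exp tB E.
Proof.
split.
  move=> c; apply: null_seq_of_proj => // n k; have [e_null _] := e_exp n.
  by have [N HN] := e_null (pr n c) k; exists N => i /HN; rewrite pr_E.
split.
  move=> c d i; apply: pr_inj => n; case: (e_exp n) => _ [eB _].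
  by rewrite -pr_E !(rhomB (pr_rhom n)) eB !pr_E.
split.
  move=> c d i; apply: pr_inj => n; case: (e_exp n) => _ [_ [eM _]].
  rewrite -pr_E (rhomM (pr_rhom n)) eM /ps_mul (rhom_sum (pr_rhom n)).
  by apply: eq_bigr => j _; rewrite (rhomM (pr_rhom n)) !pr_E.
split.
  move=> i; apply: pr_inj => n; case: (e_exp n) => _ [_ [_ [e1 _]]].
  by rewrite -pr_E (rhom1 (pr_rhom n)) (rhom_nat (pr_rhom n)) e1.
split.
  apply: continuous_of_proj => // n k; case: (e_exp n) => _ [_ [_ [_ [e_cont _]]]].
  have [l' Hl'] := e_cont k; have [l Hl] := pr_cont n l'.
  by exists l => c /Hl /Hl' e_small i; rewrite -pr_E.
split.
  move=> c; apply: pr_inj => n; case: (e_exp n) => _ [_ [_ [_ [_ [e0 _]]]]].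
  by rewrite -pr_E e0.
move=> c i j; apply: pr_inj => n; case: (e_exp n) => _ [_ [_ [_ [_ [_ eT]]]]].
rewrite -!pr_E eT (rhom_sum (pr_rhom n)); apply: eq_bigr => l _.
rewrite (rhomM (pr_rhom n)) -pr_E /binom2_coeff.
by case: ifP => _; rewrite ?(rhom_nat (pr_rhom n)) ?(rhom0 (pr_rhom n)).
Qed.

End ExponentialLimit.

Lemma lift_compatible_families {Bn : nat -> comPzRingType} {p : forall m n, Bn m -> Bn n}
  {B : comPzRingType} {pr : forall n, B -> Bn n} {A : Type} {b : A -> forall n, Bn n} :
  (forall b : forall n, Bn n, (forall m n, (n <= m)%N -> p m n (b m) = b n) ->
     exists x, forall n, pr n x = b n) ->
  (forall a m n, (n <= m)%N -> p m n (b a m) = b a n) ->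
  exists F : A -> B, forall a n, pr n (F a) = b a n.
Proof.
move=> pr_surj b_compat.
apply: (functional_choice (fun a x => forall n, pr n x = b a n)) => a.
exact/pr_surj/b_compat.
Qed.

Theorem proposition2p9
  (Bn : nat -> comPzRingType) (tn : forall n, lintop (Bn n))
  (p : forall m n, Bn m -> Bn n)
  (Hcompl : forall n, lt_complete (tn n))
  (Hp_hom : forall m n, (n <= m)%N -> is_rhom (p m n))
  (Hp_cont : forall m n, (n <= m)%N -> lt_continuous (tn m) (tn n) (p m n))
  (Hp_surj : forall m n, (n <= m)%N -> forall y, exists x, p m n x = y)
  (Hp_id : forall n x, p n n x = x)
  (Hp_comp : forall m n l, (l <= n)%N -> (n <= m)%N ->
     forall x, p n l (p m n x) = p m l x)
  (* B = lim_n B_n with projections pr n *)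
  (B : comPzRingType) (tB : lintop B) (pr : forall n, B -> Bn n)
  (Hpr_hom : forall n, is_rhom (pr n))
  (Hpr_compat : forall m n, (n <= m)%N -> forall x, p m n (pr m x) = pr n x)
  (Hpr_inj : forall x y, (forall n, pr n x = pr n y) -> x = y)
  (Hpr_surj : forall b : forall n, Bn n,
     (forall m n, (n <= m)%N -> p m n (b m) = b n) ->
     exists x, forall n, pr n x = b n)
  (* tB is the inverse limit topology: the pr n are continuous, and every
     basic open ideal of B contains a finite intersection of preimages of
     open ideals of the B_n *)
  (HtB_cont : forall n, lt_continuous tB (tn n) (pr n))
  (HtB_coarse : forall l, exists s : seq (nat * nat),
     forall x, (forall nk, nk \in s -> lt_basis (tn nk.1) nk.2 (pr nk.1 x)) ->
       lt_basis tB l x)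
  (* the exponentials e n *)
  (e : forall n, Bn n -> nat -> Bn n)
  (He : forall n, restricted_exp (tn n) (e n))
  (He_compat : forall m n, (n <= m)%N ->
     forall x i, e n (p m n x) i = p m n (e m x i)) :
  exists! E : B -> nat -> B,
    restricted_exp tB E /\ (forall n x i, e n (pr n x) i = pr n (E x i)).
Proof.
have [E' prE'] : exists E' : B * nat -> B, forall xi n,
    pr n (E' xi) = e n (pr n xi.1) xi.2.
  apply: (lift_compatible_families (b := fun xi n => e n (pr n xi.1) xi.2) Hpr_surj).
  by move=> [x i] m n le_nm /=; rewrite -He_compat // Hpr_compat.
pose E x i := E' (x, i).
have pr_E n x i : e n (pr n x) i = pr n (E x i) by rewrite prE'.
exists E; split.
  by split; first exact: restricted_exp_of_proj pr_E.
move=> F [_ pr_F]; apply: functional_extensionality => x.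
apply: functional_extensionality => i; apply: Hpr_inj => n.
by rewrite -pr_E pr_F.
Qed.
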